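(* For the Pólya urn process on $H$ and any vertex $i\in[m]$, $\mathbb P\big[\lim_{n\to\infty}B_i(n)=\infty\big]=1$.
   Context: Let $H=(V,E)$ be a finite hypergraph with vertex set $V=[m]=\{1,\dots,m\}$ and a set $E$ of $N\ge 1$ hyperedges (nonempty subsets of $[m]$), such that every vertex belongs to at least one hyperedge. Pólya urn on $H$: initially vertex $i$ holds $B_i(0)\ge 1$ balls; $N_0=\sum_{i=1}^m B_i(0)$. At each step $n\ge 1$, for each hyperedge $I\in E$ (independently across hyperedges, conditionally on the past) one ball is added to a vertex $i\in I$ chosen with probability $B_i(n-1)/\sum_{j\in I}B_j(n-1)$, where $B_i(n)$ denotes the number of balls at vertex $i$ after step $n$. *)

From HB Require Import structures.
From mathcomp Require Import all_boot all_order all_algebra.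
From mathcomp Require Import all_classical all_reals all_analysis.
Set Implicit Arguments. Unset Strict Implicit. Unset Printing Implicit Defensive.
Import Order.TTheory GRing.Theory Num.Theory.
Local Open Scope ring_scope.

(* Hypergraph on vertices 'I_m with N hyperedges e : 'I_N -> {set 'I_m}.
   A choice at one step is c : {ffun 'I_N -> 'I_m}: c j is the vertex of the
   hyperedge e j that receives the ball. Choice sequences are indexed from 0:
   c s is the choice made at step s.+1. *)

Definition urnB (m N : nat) (B0 : {ffun 'I_m -> nat})
  (c : nat -> {ffun 'I_N -> 'I_m}) (n : nat) (i : 'I_m) : nat :=
  (B0 i + \sum_(s < n) #|[set j : 'I_N | c s j == i]|)%N.

Definition stepProb (R : realType) (m N : nat) (e : 'I_N -> {set 'I_m})
  (b : 'I_m -> nat) (c : {ffun 'I_N -> 'I_m}) : R :=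
  \prod_(j < N) (if c j \in e j
                 then (b (c j))%:R / (\sum_(v in e j) b v)%:R
                 else 0).

Definition pathProb (R : realType) (m N : nat) (e : 'I_N -> {set 'I_m})
  (B0 : {ffun 'I_m -> nat}) (c : nat -> {ffun 'I_N -> 'I_m}) (n : nat) : R :=
  \prod_(s < n) stepProb R e (urnB B0 c s) (c s).

(* Fix a hyperedge j containing i. Whatever the history up to step n, j gives its
   ball to i at step n + 1 with probability B_i(n) / sum_(v in j) B_v(n), which is
   at least 1 / (N_0 + n N) because B_i(n) >= 1 and the urn holds exactly N_0 + n N
   balls after n steps. Hence the probability that j never picks i between step
   n0 + 1 and step n is at most prod_(n0 <= s < n) (1 - 1 / (N_0 + s N)), which
   tends to 0 since the harmonic series diverges. So almost surely j picks i
   infinitely often, and the nondecreasing B_i(n) tends to infinity. *)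

From HB Require Import structures.
From mathcomp Require Import all_boot all_order all_algebra.
From mathcomp Require Import all_classical all_reals all_analysis.
From mathcomp Require Import zify lra.
Import Order.TTheory GRing.Theory Num.Theory.
Local Open Scope classical_set_scope.
Local Open Scope ring_scope.
Set Implicit Arguments. Unset Strict Implicit. Unset Printing Implicit Defensive.

Lemma harmonic_sum_unbounded (R : realType) (L : R) :
  exists k, L < \sum_(s < k) (s.+1%:R)^-1.
Proof.
apply: contrapT => /forallNP bounded; apply: (@dvg_harmonic R).
apply: nondecreasing_is_cvgn.
  by apply: nondecreasing_series => n _ _; exact: harmonic_ge0.
exists L => _ [k _ <-]; rewrite /series /= big_mkord.
by have /negP := bounded k; rewrite -leNgt.
Qed.

Lemma sum_inv_linear_unbounded (R : realType) (a b : nat) (L : R) :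
  (0 < a)%N -> exists k, L < \sum_(s < k) ((a + s * b)%:R)^-1.
Proof.
move=> a_gt0; have ab_gt0 : (0 < a + b)%N by rewrite addn_gt0 a_gt0.
have [k Lk] := harmonic_sum_unbounded ((a + b)%:R * L : R).
exists k; rewrite -(@ltr_pM2l _ (a + b)%:R) ?ltr0n //.
apply: (lt_le_trans Lk); rewrite mulr_sumr; apply: ler_sum => s _.
rewrite ler_pdivlMr ?ltr0n ?addn_gt0 ?a_gt0 // mulrC ler_pdivrMr ?ltr0n //.
by rewrite -natrM ler_nat; nia.
Qed.

(* Since (1 - x) (1 + S + x) <= 1 + S for x, S >= 0, the weighted quantity
   u k * (1 + \sum_(s < k) x s) is nonincreasing. *)
Lemma contraction_weighted_le (R : realFieldType) (u x : nat -> R) :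
  (forall k, 0 <= x k) -> (forall k, 0 <= u k) ->
  (forall k, u k.+1 <= (1 - x k) * u k) ->
  forall k, u k * (1 + \sum_(s < k) x s) <= u 0%N.
Proof.
move=> x_ge0 u_ge0 contr; elim=> [|k IH]; first by rewrite big_ord0 addr0 mulr1.
rewrite big_ord_recr /=; set S := \sum_(s < k) x s in IH *.
have S_ge0 : 0 <= S by apply: sumr_ge0.
apply: le_trans IH.
apply: (le_trans (ler_wpM2r _ (contr k))); first by rewrite addr_ge0 ?addr_ge0.
have uk := u_ge0 k; have xk := x_ge0 k.
have : 0 <= u k * (x k * S) by rewrite !mulr_ge0.
have : 0 <= u k * (x k * x k) by rewrite !mulr_ge0.
nra.
Qed.

Lemma contraction_divergent_small (R : realFieldType) (u x : nat -> R) :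
  (forall k, 0 <= x k) -> (forall k, 0 <= u k) ->
  (forall k, u k.+1 <= (1 - x k) * u k) ->
  (forall L, exists k, L < \sum_(s < k) x s) ->
  forall eps, 0 < eps -> exists k, u k <= eps.
Proof.
move=> x_ge0 u_ge0 contr diverge eps eps_gt0.
have [k Sk] := diverge (u 0%N / eps); exists k.
have := contraction_weighted_le x_ge0 u_ge0 contr k.
set S := \sum_(s < k) x s in Sk *.
have u0_lt : u 0%N < eps * S by rewrite mulrC -ltr_pdivrMr.
move=> ukS; have uk := u_ge0 k; have u0 := u_ge0 0%N.
have S_ge0 : 0 <= S by apply: sumr_ge0.
rewrite leNgt; apply/negP => epsu; nra.
Qed.

Lemma sum_card_fibers (T U : finType) (f : T -> U) :
  (\sum_(y : U) #|[set x | f x == y]%SET| = #|T|)%N.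
Proof.
rewrite -sum1_card (partition_big f xpredT) //=.
by apply: eq_bigr => y _; rewrite -sum1_card; apply: eq_bigl => x; rewrite inE.
Qed.

Section UrnCounts.
Variables (m N : nat) (B0 : {ffun 'I_m -> nat}).
Local Notation F := {ffun 'I_N -> 'I_m}.

Lemma urnB_ext (c c' : nat -> F) n :
  (forall s, (s < n)%N -> c s = c' s) -> urnB B0 c n = urnB B0 c' n.
Proof.
by move=> cc'; apply/funext => i; congr addn; apply: eq_bigr => s _; rewrite cc'.
Qed.

Lemma urnBS (c : nat -> F) n i :
  urnB B0 c n.+1 i = (urnB B0 c n i + #|[set j | c n j == i]%SET|)%N.
Proof. by rewrite /urnB big_ord_recr /= addnA. Qed.

Lemma urnB_nondecreasing (c : nat -> F) i :
  {homo urnB B0 c ^~ i : n n' / (n <= n')%N}.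
Proof.
move=> n n' /subnK <-; elim: (n' - n)%N => [|k IH] //.
by rewrite addSn urnBS (leq_trans IH) ?leq_addr.
Qed.

Lemma sum_urnB (c : nat -> F) n :
  (\sum_v urnB B0 c n v = \sum_v B0 v + n * N)%N.
Proof.
rewrite /urnB big_split /= exchange_big /=; congr addn.
under eq_bigr do rewrite sum_card_fibers card_ord.
by rewrite sum_nat_const card_ord.
Qed.

Lemma urnB_unbounded (c : nat -> F) i j :
  (forall n0, exists2 s, (n0 <= s)%N & c s j = i) ->
  forall M, exists n0, forall n, (n0 <= n)%N -> (M <= urnB B0 c n i)%N.
Proof.
move=> often; suff reach M : exists n0, (M <= urnB B0 c n0 i)%N.
  move=> M; have [n0 Mn0] := reach M; exists n0 => n n0n.
  exact: leq_trans Mn0 (urnB_nondecreasing c i n0n).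
elim: M => [|M [n0 Mn0]]; first by exists 0%N.
have [s n0s csj] := often n0; exists s.+1; rewrite urnBS.
have picked : (0 < #|[set j' | c s j' == i]%SET|)%N.
  by apply/card_gt0P; exists j; rewrite inE csj.
by rewrite -addn1 leq_add // (leq_trans Mn0) ?(urnB_nondecreasing c i n0s).
Qed.
End UrnCounts.

Section StepProb.
Variables (R : realType) (m N : nat) (e : 'I_N -> {set 'I_m}).
Hypothesis e_neq0 : forall j, e j != finset.set0.
Variable b : 'I_m -> nat.
Hypothesis b_gt0 : forall v, (0 < b v)%N.

Lemma edge_sum_gt0 j : (0 < \sum_(v in e j) b v)%N.
Proof.
have /set0Pn[v vj] := e_neq0 j.
by rewrite (bigD1 v) //= (leq_trans (b_gt0 v)) ?leq_addr.
Qed.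

Definition edge_share j v : R :=
  if v \in e j then (b v)%:R / (\sum_(w in e j) b w)%:R else 0.

Lemma sum_edge_share j : \sum_v edge_share j v = 1.
Proof.
rewrite -big_mkcond /= -mulr_suml -natr_sum divff //.
by rewrite pnatr_eq0 -lt0n edge_sum_gt0.
Qed.

Lemma stepProb_ge0 c : 0 <= stepProb R e b c.
Proof. by apply: prodr_ge0 => j _; rewrite /edge_share; case: ifP. Qed.

Lemma sum_stepProb_avoid i j0 : i \in e j0 ->
  \sum_(c : {ffun 'I_N -> 'I_m} | c j0 != i) stepProb R e b c
    = 1 - (b i)%:R / (\sum_(v in e j0) b v)%:R.
Proof.
move=> ij0.
(* [stepProb R e b c] unfolds to [\prod_j edge_share j (c j)]. *)
pose share' j v := if (j == j0) && (v == i) then 0 else edge_share j v.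
transitivity (\sum_(c : {ffun 'I_N -> 'I_m}) \prod_j share' j (c j)).
  rewrite big_mkcond; apply: eq_bigr => c _.
  have [cj0|cj0] /= := eqVneq (c j0) i.
    by rewrite (bigD1 j0) //= /share' eqxx cj0 eqxx mul0r.
  apply: eq_bigr => j _; rewrite /share'.
  by case: eqVneq => [->|]; rewrite ?(negbTE cj0).
rewrite -(bigA_distr_bigA (R := R)) /= (bigD1 j0) //= [X in _ * X]big1 ?mulr1; last first.
  by move=> j /negbTE jj0; rewrite /share' jj0 sum_edge_share.
rewrite (bigD1 i) //= /share' !eqxx /= add0r.
have share1 := sum_edge_share j0.
rewrite (bigD1 i) //= {1}/edge_share ij0 in share1.
rewrite -[X in _ = X - _]share1 addrAC subrr add0r.
by apply: eq_bigr => v /negbTE vi; rewrite vi.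
Qed.

End StepProb.

Section Paths.
Variables (m N : nat) (e : 'I_N -> {set 'I_m}) (B0 : {ffun 'I_m -> nat}).
Variable R : realType.
Local Notation F := {ffun 'I_N -> 'I_m}.
(* A path of length n is a finite function; [ext] reads it as an infinite path,
   padded with the dummy choice [x0] which quantities depending on the first n
   steps never inspect. *)
Variable x0 : F.

Definition ext n (f : {ffun 'I_n -> F}) : nat -> F :=
  fun s => if insub s is Some k then f k else x0.

Definition snoc n (g : {ffun 'I_n -> F}) (x : F) : {ffun 'I_n.+1 -> F} :=
  [ffun k : 'I_n.+1 => if insub (val k) is Some k' then g k' else x].

Lemma ext_ord n (f : {ffun 'I_n -> F}) (k : 'I_n) : ext f k = f k.
Proof. by rewrite /ext valK. Qed.

Lemma ext_snoc n (g : {ffun 'I_n -> F}) x s :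
  (s < n)%N -> ext (snoc g x) s = ext g s.
Proof.
move=> sn; rewrite {1}/ext; case: insubP => [k _ kE|]; last by rewrite ltnS ltnW.
by rewrite ffunE kE /ext; case: insubP => //; rewrite sn.
Qed.

Lemma ext_snoc_last n (g : {ffun 'I_n -> F}) x : ext (snoc g x) n = x.
Proof.
rewrite /ext; case: insubP => [k _ kE|]; last by rewrite ltnSn.
by rewrite ffunE kE insubN ?ltnn.
Qed.

Lemma sum_ffunS n (G : {ffun 'I_n.+1 -> F} -> R) :
  \sum_f G f = \sum_(g : {ffun 'I_n -> F}) \sum_(x : F) G (snoc g x).
Proof.
rewrite pair_big /= (reindex (fun p : {ffun 'I_n -> F} * F => snoc p.1 p.2)) //=.
exists (fun f => ([ffun k : 'I_n => f (widen_ord (leqnSn n) k)], f ord_max)).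
  move=> [g x] _ /=; congr pair.
    apply/ffunP => k; rewrite !ffunE; case: insubP => [k' _ vk|].
      by have -> : k' = k by apply: val_inj.
    by rewrite /= ltn_ord.
  by rewrite ffunE /=; case: insubP => [k' |] //; rewrite /= ltnn.
move=> f _; apply/ffunP => k; rewrite ffunE /=; case: insubP => [k' _ vk|kn].
  by rewrite ffunE; congr (fun_of_fin f _); apply: val_inj; rewrite /= vk.
congr (fun_of_fin f _); apply: val_inj => /=; have := ltn_ord k; move: kn; lia.
Qed.

Lemma pathProb_ext (c c' : nat -> F) n :
  (forall s, (s < n)%N -> c s = c' s) -> pathProb R e B0 c n = pathProb R e B0 c' n.
Proof.
move=> cc'; apply: eq_bigr => s _; rewrite cc' // (@urnB_ext _ _ _ c c') //.
by move=> s' s's; rewrite cc' // (ltn_trans s's).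
Qed.

Lemma pathProb_snoc n (g : {ffun 'I_n -> F}) x :
  pathProb R e B0 (ext (snoc g x)) n.+1 =
  pathProb R e B0 (ext g) n * stepProb R e (urnB B0 (ext g) n) x.
Proof.
have snoc_ext s : (s < n)%N -> ext (snoc g x) s = ext g s by exact: ext_snoc.
rewrite {1}/pathProb big_ord_recr /=; congr (_ * _); first exact: pathProb_ext.
by rewrite ext_snoc_last (urnB_ext B0 snoc_ext).
Qed.

Lemma pathProb_ge0 c n : 0 <= pathProb R e B0 c n.
Proof. by apply: prodr_ge0 => s _; exact: stepProb_ge0. Qed.

Definition total_balls n := (\sum_v B0 v + n * N)%N.

Variables (i : 'I_m) (j0 : 'I_N) (n0 : nat).

Definition avoids n (c : nat -> F) :=
  [forall k : 'I_n, (n0 <= k)%N ==> (c k j0 != i)].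

Lemma avoids_snoc n (g : {ffun 'I_n -> F}) x :
  avoids n.+1 (ext (snoc g x)) = avoids n (ext g) && ((n0 <= n)%N ==> (x j0 != i)).
Proof.
apply/forallP/andP => [avoid|[/forallP avoid last_ok] k].
  split; last by have := avoid ord_max; rewrite /= ext_snoc_last.
  by apply/forallP => k; have := avoid (widen_ord (leqnSn n) k); rewrite /= ext_snoc.
have := ltn_ord k; rewrite ltnS leq_eqVlt => /predU1P[->|kn].
  by rewrite ext_snoc_last.
by rewrite ext_snoc //; exact: (avoid (Ordinal kn)).
Qed.

Definition avoid_prob n :=
  \sum_(f : {ffun 'I_n -> F} | avoids n (ext f)) pathProb R e B0 (ext f) n.

Lemma avoid_prob_ge0 n : 0 <= avoid_prob n.
Proof. by apply: sumr_ge0 => f _; exact: pathProb_ge0. Qed.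

Hypothesis e_neq0 : forall j, e j != finset.set0.
Hypothesis B0_gt0 : forall v, (0 < B0 v)%N.
Hypothesis ij0 : i \in e j0.

Lemma avoid_prob_step n : (n0 <= n)%N ->
  avoid_prob n.+1 <= (1 - (total_balls n)%:R^-1) * avoid_prob n.
Proof.
move=> n0n; rewrite /avoid_prob mulr_sumr [leLHS]big_mkcond [leRHS]big_mkcond.
rewrite sum_ffunS; apply: ler_sum => g _.
under eq_bigr do rewrite avoids_snoc pathProb_snoc n0n.
case: (avoids n (ext g)); last by rewrite big1 ?mulr0.
set b := urnB B0 (ext g) n.
have b_gt0 v : (0 < b v)%N by rewrite (leq_trans (B0_gt0 v)) ?leq_addr.
rewrite -big_mkcond -mulr_sumr sum_stepProb_avoid // mulrC.
apply: ler_wpM2r; first exact: pathProb_ge0.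
rewrite lerD2l lerN2.
have edge_le_total : (\sum_(v in e j0) b v <= total_balls n)%N.
  rewrite /total_balls -(sum_urnB B0 (ext g)) [leqRHS](bigID (mem (e j0))) /=.
  exact: leq_addr.
have edge_gt0 := edge_sum_gt0 e_neq0 b_gt0 j0.
rewrite ler_pdivlMr ?ltr0n // mulrC ler_pdivrMr ?ltr0n ?(leq_trans edge_gt0) //.
by rewrite -natrM ler_nat (leq_trans edge_le_total) ?leq_pmull.
Qed.

End Paths.

Section Trajectories.
Variables (m N : nat) (e : 'I_N -> {set 'I_m}) (B0 : {ffun 'I_m -> nat}).
Variables (d : measure_display) (T : measurableType d) (R : realType).
Variables (P : probability T R) (X : nat -> T -> {ffun 'I_N -> 'I_m}).
Local Notation F := {ffun 'I_N -> 'I_m}.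
Hypothesis cylinder_prob : forall n (c : nat -> F),
  measurable [set t | forall s, (s < n)%N -> X s t = c s] /\
  P [set t | forall s, (s < n)%N -> X s t = c s] = (pathProb R e B0 c n)%:E.

Definition trajectory t : nat -> F := fun s => X s t.

Definition prefix n t : {ffun 'I_n -> F} := [ffun k : 'I_n => X k t].

Definition prefix_determined n (Q : (nat -> F) -> bool) :=
  forall c c', (forall s, (s < n)%N -> c s = c' s) -> Q c = Q c'.

Hypothesis e_neq0 : forall j, e j != finset.set0.
Hypothesis B0_gt0 : forall v, (0 < B0 v)%N.

Section Prefixes.
Variable x0 : F.

Lemma ext_prefix n t s : (s < n)%N -> ext x0 (prefix n t) s = X s t.
Proof. by move=> sn; rewrite /ext; case: insubP => [k _ <-|]; rewrite ?ffunE ?sn. Qed.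

Lemma cylinder_prefix n (f : {ffun 'I_n -> F}) :
  measurable [set t | prefix n t = f] /\
  P [set t | prefix n t = f] = (pathProb R e B0 (ext x0 f) n)%:E.
Proof.
suff -> : [set t | prefix n t = f] =
    [set t | forall s, (s < n)%N -> X s t = ext x0 f s] by exact: cylinder_prob.
apply/seteqP; split=> t /= => [<- s sn|Xf]; first by rewrite ext_prefix.
by apply/ffunP => k; rewrite ffunE Xf // ext_ord.
Qed.

Lemma prefix_event n (Q : (nat -> F) -> bool) : prefix_determined n Q ->
  measurable [set t | Q (trajectory t)] /\
  P [set t | Q (trajectory t)] =
    (\sum_(f : {ffun 'I_n -> F} | Q (ext x0 f)) pathProb R e B0 (ext x0 f) n)%:E.
Proof.
move=> detQ.
have -> : [set t | Q (trajectory t)] =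
    \bigcup_(f in [set f | Q (ext x0 f)]) [set t | prefix n t = f].
  apply/seteqP; split=> t /= => [Qt|[f /= + fE]]; last rewrite -fE.
    exists (prefix n t) => //=.
    by rewrite (detQ _ (trajectory t)) // => s; exact: ext_prefix.
  by rewrite (detQ _ (ext x0 (prefix n t))) // => s sn; rewrite ext_prefix.
have cyl_meas (f : {ffun 'I_n -> F}) : measurable [set t | prefix n t = f].
  exact: (cylinder_prefix f).1.
have disjoint : trivIset [set f | Q (ext x0 f)] (fun f => [set t | prefix n t = f]).
  by move=> f g _ _ [t [/= <- <-]].
split; first exact: fin_bigcup_measurable.
rewrite (measure_fin_bigcup P finite_finset disjoint (fun f _ => cyl_meas f)) -sumEFin.
rewrite (bigfs _ _ (P := fun f => Q (ext x0 f))) ?index_enum_uniq //; last first.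
  by move=> f _; rewrite mem_index_enum.
by apply: eq_fsbigr => f _; exact: (cylinder_prefix f).2.
Qed.
End Prefixes.

Section Avoidance.
Variables (i : 'I_m) (j0 : 'I_N) (n0 : nat).
Hypothesis ij0 : i \in e j0.
Let x0 : F := [ffun=> i].
Local Notation avoid_prob := (avoid_prob e B0 R x0 i j0 n0).

Definition never_picked_after := [set t | forall s, (n0 <= s)%N -> X s t j0 != i].

Lemma avoids_determined n : prefix_determined n (avoids i j0 n0 n).
Proof. by move=> c c' cc'; apply: eq_forallb => k; rewrite cc'. Qed.

Lemma never_picked_afterE :
  never_picked_after = \bigcap_n [set t | avoids i j0 n0 n (trajectory t)].
Proof.
apply/seteqP; split=> t /= => [never n _|avoid s n0s].
  by apply/forallP => k; apply/implyP => n0k; exact: never.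
by have /forallP/(_ (Ordinal (ltnSn s))) := avoid s.+1 I; rewrite /= n0s.
Qed.

Lemma measurable_never_picked_after : measurable never_picked_after.
Proof.
rewrite never_picked_afterE; apply: bigcapT_measurable => n.
exact: (prefix_event x0 (avoids_determined (n := n))).1.
Qed.

Lemma never_picked_after_le n : (P never_picked_after <= (avoid_prob n)%:E)%E.
Proof.
have [avoid_meas <-] := prefix_event x0 (avoids_determined (n := n)).
apply: le_measure; rewrite ?inE //; first exact: measurable_never_picked_after.
by rewrite never_picked_afterE => t /(_ n I).
Qed.

Lemma never_picked_after_null : P never_picked_after = 0%E.
Proof.
apply/eqP; rewrite eq_le measure_ge0 andbT.
apply/lee_addgt0Pr => eps eps_gt0; rewrite add0e.
pose x k : R := ((total_balls N B0 n0 + k * N)%:R)^-1.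
have x_ge0 k : 0 <= x k by rewrite invr_ge0.
have step k : avoid_prob (n0 + k.+1) <= (1 - x k) * avoid_prob (n0 + k).
  have := avoid_prob_step R x0 e_neq0 B0_gt0 ij0 (leq_addr k n0).
  by rewrite addnS /x /total_balls mulnDl addnA.
have total_gt0 : (0 < total_balls N B0 n0)%N.
  by rewrite /total_balls (bigD1 i) //= -addnA (leq_trans (B0_gt0 i)) ?leq_addr.
have avoid_ge0 k := avoid_prob_ge0 e B0 R x0 i j0 n0 (n0 + k).
have diverge (L : R) := sum_inv_linear_unbounded N L total_gt0.
have [k small] := contraction_divergent_small x_ge0 avoid_ge0 step diverge eps_gt0.
by apply: le_trans (never_picked_after_le (n0 + k)) _; rewrite lee_fin.
Qed.
End Avoidance.

Variable i : 'I_m.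

Definition unbounded_at := [set t | forall M, exists n0, forall n,
  (n0 <= n)%N -> (M <= urnB B0 (trajectory t) n i)%N].

Lemma measurable_unbounded_at : measurable unbounded_at.
Proof.
pose grown M n0 n (c : nat -> F) := (n0 <= n)%N ==> (M <= urnB B0 c n i)%N.
have grown_determined M n0 n : prefix_determined n (grown M n0 n).
  by move=> c c' cc'; rewrite /grown (urnB_ext B0 cc').
suff -> : unbounded_at =
    \bigcap_M \bigcup_n0 \bigcap_n [set t | grown M n0 n (trajectory t)].
  do 3![apply: bigcapT_measurable => ? || apply: bigcupT_measurable => ?].
  exact: (prefix_event [ffun=> i] (grown_determined _ _ _)).1.
apply/seteqP; split=> t /= => [growth M _|growth M].
  by have [n0 n0_ok] := growth M; exists n0 => // n _; exact/implyP/n0_ok.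
have [n0 _ n0_ok] := growth M I; exists n0 => n.
by apply/implyP; exact: n0_ok.
Qed.

Lemma not_unbounded_never_picked j0 :
  ~` unbounded_at `<=` \bigcup_n0 never_picked_after i j0 n0.
Proof.
move=> t not_unbounded; apply: contrapT => not_never; apply: not_unbounded.
apply: (urnB_unbounded B0 (j := j0)) => n0.
apply: contrapT => /forall2NP no_pick; apply: not_never; exists n0 => // s n0s.
by case: (no_pick s) => // /eqP.
Qed.

Lemma never_picked_eventually_negligible j0 : i \in e j0 ->
  P.-negligible (\bigcup_n0 never_picked_after i j0 n0).
Proof.
move=> ij0; apply: negligible_bigcup => n0.
exists (never_picked_after i j0 n0); split => //.
  exact: measurable_never_picked_after.
exact: never_picked_after_null.
Qed.

End Trajectories.

Unset Implicit Arguments.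

Theorem mainTheorem12 (m N : nat) (e : 'I_N -> {set 'I_m})
  (B0 : {ffun 'I_m -> nat})
  (d : measure_display) (T : measurableType d) (R : realType)
  (P : probability T R) (X : nat -> T -> {ffun 'I_N -> 'I_m}) :
  (0 < N)%N ->
  injective e ->
  (forall j, e j != finset.set0) ->
  (forall i : 'I_m, exists j : 'I_N, i \in e j) ->
  (forall i, (1 <= B0 i)%N) ->
  (forall (n : nat) (c : nat -> {ffun 'I_N -> 'I_m}),
      measurable [set t | forall s, (s < n)%N -> X s t = c s] /\
      P [set t | forall s, (s < n)%N -> X s t = c s] = (pathProb R e B0 c n)%:E) ->
  forall i : 'I_m,
    let A := [set t | forall M : nat, exists n0 : nat, forall n : nat,
                 (n0 <= n)%N -> (M <= urnB B0 (fun s => X s t) n i)%N] in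
    measurable A /\ P A = 1%E.
Proof.
move=> _ _ e_neq0 covered B0_gt0 cylinder_prob i A.
have [j0 ij0] := covered i.
have A_meas : measurable A := measurable_unbounded_at cylinder_prob i.
have notA_sub : ~` A `<=` \bigcup_n0 never_picked_after X i j0 n0.
  exact: not_unbounded_never_picked.
have notA_null : P (~` A) = 0%E.
  apply: measure_negligible; first exact: measurableC.
  apply: negligibleS notA_sub _.
  exact: (never_picked_eventually_negligible cylinder_prob e_neq0 B0_gt0 ij0).
split => //; rewrite -[A]setCK probability_setC; last exact: measurableC.
by rewrite notA_null sube0.
Qed.
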